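(* Let $g\colon X_m\to X_m$ be an odometer with metric $d(x,y)=\sup_{k\ge1}2^{-k}\delta(x_k,y_k)$, where $\delta(a,b)=0$ if $a=b$ and $1$ otherwise. Let $X=\{p\}\sqcup X_m$ with $d$ extended to a metric on $X$ such that $d(p,x)>1$ for all $x\in X_m$. Let $q=(0,0,\dots)\in X_m$ and define $f\colon X\to X$ by $f(p)=q$ and $f(x)=g(x)$ for $x\in X_m$. Then $f$ is equicontinuous and has the shadowing property, but $f$ does not have the s-limit shadowing property.
   Context: Odometer: given a strictly increasing sequence $m=(m_k)_{k\ge1}$ of positive integers with $m_1\ge2$ and $m_k\mid m_{k+1}$, $X_m=\{(x_k)_{k\ge1}\in\prod_{k}\{0,\dots,m_k-1\}: x_k\equiv x_{k+1}\pmod{m_k}\ \forall k\}$ and $g(x)_k=x_k+1\pmod{m_k}$. $f$ is equicontinuous if for every $\epsilon>0$ there is $\delta>0$ with $d(x,y)\le\delta\Rightarrow\sup_{n\ge0}d(f^n(x),f^n(y))\le\epsilon$. A $\delta$-pseudo orbit is $(x_i)_{i\ge0}$ with $d(f(x_i),x_{i+1})\le\delta$ for all $i$; it is $\epsilon$-shadowed by $x$ if $d(x_i,f^i(x))\le\epsilon$ for all $i$; a limit pseudo orbit satisfies $\lim_i d(f(x_i),x_{i+1})=0$, and $y$ is a limit shadowing point of it if $\lim_i d(x_i,f^i(y))=0$. Shadowing property: for every $\epsilon>0$ there is $\delta>0$ such that every $\delta$-pseudo orbit is $\epsilon$-shadowed by some point. s-limit shadowing property: for every $\epsilon>0$ there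 is $\delta>0$ such that (1) every $\delta$-pseudo orbit is $\epsilon$-shadowed by some point, and (2) every $\delta$-pseudo orbit that is also a limit pseudo orbit is $\epsilon$-shadowed by some point that is also a limit shadowing point of it. *)

From Stdlib Require Import Reals Lra Lia Arith.
Open Scope R_scope.

(* The paper's sequence (m_k)_{k>=1} is represented 0-indexed: [m i] is m_{i+1}. *)
Record odoseq := {
  m :> nat -> nat;
  m_ge2 : (2 <= m 0)%nat;
  m_inc : forall k, (m k < m (S k))%nat;
  m_div : forall k, Nat.divide (m k) (m (S k))
}.

Lemma odo_pos (M : odoseq) k : (m M k <> 0)%nat.
Proof.
  assert (H : forall k, (2 <= m M k)%nat).
  { induction k0. apply m_ge2. pose proof (m_inc M k0). lia. }
  specialize (H k). lia.
Qed.

(* X_m : 0-indexed sequences, [x i] is x_{i+1}. *)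
Definition Xm (M : odoseq) : Type :=
  { x : nat -> nat | forall k, (x k < M k)%nat /\ x k = (x (S k) mod M k)%nat }.

Lemma mod_mod_dvd a b c : c <> 0%nat -> Nat.divide c b -> ((a mod b) mod c = a mod c)%nat.
Proof.
  intros Hc [t Ht]. subst b.
  destruct (Nat.eq_dec t 0) as [->|Ht0].
  - simpl. reflexivity.
  - rewrite (Nat.div_mod_eq a (t * c)) at 2.
    rewrite Nat.add_comm.
    replace (t * c * (a / (t * c)))%nat with ((t * (a / (t * c))) * c)%nat by lia.
    rewrite Nat.Div0.mod_add. reflexivity.
Qed.

Lemma odo_g_ok (M : odoseq) (x : Xm M) :
  forall k, (((proj1_sig x k + 1) mod M k) < M k)%nat /\
    ((proj1_sig x k + 1) mod M k = ((proj1_sig x (S k) + 1) mod M (S k)) mod M k)%nat.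
Proof.
  intro k. destruct x as [x Hx]; simpl. split.
  - apply Nat.mod_upper_bound, odo_pos.
  - rewrite mod_mod_dvd by (apply odo_pos || apply m_div).
    destruct (Hx k) as [_ ->].
    apply Nat.Div0.add_mod_idemp_l.
Qed.

Definition odo_g (M : odoseq) (x : Xm M) : Xm M :=
  exist _ (fun k => ((proj1_sig x k + 1) mod M k)%nat) (odo_g_ok M x).

Lemma odo_zero_ok (M : odoseq) :
  forall k, ((fun _ : nat => 0%nat) k < M k)%nat /\ (fun _ : nat => 0%nat) k = (0 mod M k)%nat.
Proof. intro k. pose proof (odo_pos M k). split. simpl; lia. simpl. rewrite Nat.Div0.mod_0_l. reflexivity. Qed.

Definition odo_q (M : odoseq) : Xm M := exist _ (fun _ => 0%nat) (odo_zero_ok M).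

Definition discr (a b : nat) : R := if Nat.eq_dec a b then 0 else 1.

(* The set {2^{-k} delta(x_k, y_k) : k >= 1}, 0-indexed: weight (1/2)^(i+1) at index i. *)
Definition odo_dist_set (M : odoseq) (x y : Xm M) : R -> Prop :=
  fun r => exists i : nat, r = (/2) ^ (S i) * discr (proj1_sig x i) (proj1_sig y i).

(* X = {p} ⊔ X_m, with p = None. f(p) = q, f(x) = g(x). *)
Definition ext_f (M : odoseq) (z : option (Xm M)) : option (Xm M) :=
  match z with
  | None => Some (odo_q M)
  | Some x => Some (odo_g M x)
  end.

Definition is_metric {T : Type} (d : T -> T -> R) : Prop :=
  (forall a b, d a b = 0 <-> a = b) /\
  (forall a b, d a b = d b a) /\
  (forall a b c, d a c <= d a b + d b c).

Definition equicontinuous {T : Type} (d : T -> T -> R) (f : T -> T) : Prop :=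
  forall eps, eps > 0 -> exists delta, delta > 0 /\
    forall x y, d x y <= delta -> forall n : nat, d (Nat.iter n f x) (Nat.iter n f y) <= eps.

Definition pseudo_orbit {T : Type} (d : T -> T -> R) (f : T -> T) (delta : R) (xs : nat -> T) : Prop :=
  forall i, d (f (xs i)) (xs (S i)) <= delta.

Definition shadows {T : Type} (d : T -> T -> R) (f : T -> T) (eps : R) (xs : nat -> T) (x : T) : Prop :=
  forall i, d (xs i) (Nat.iter i f x) <= eps.

Definition limit_pseudo_orbit {T : Type} (d : T -> T -> R) (f : T -> T) (xs : nat -> T) : Prop :=
  Un_cv (fun i => d (f (xs i)) (xs (S i))) 0.

Definition limit_shadowing_point {T : Type} (d : T -> T -> R) (f : T -> T) (xs : nat -> T) (y : T) : Prop :=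
  Un_cv (fun i => d (xs i) (Nat.iter i f y)) 0.

Definition shadowing_property {T : Type} (d : T -> T -> R) (f : T -> T) : Prop :=
  forall eps, eps > 0 -> exists delta, delta > 0 /\
    forall xs, pseudo_orbit d f delta xs -> exists x, shadows d f eps xs x.

Definition s_limit_shadowing_property {T : Type} (d : T -> T -> R) (f : T -> T) : Prop :=
  forall eps, eps > 0 -> exists delta, delta > 0 /\
    (forall xs, pseudo_orbit d f delta xs -> exists x, shadows d f eps xs x) /\
    (forall xs, pseudo_orbit d f delta xs -> limit_pseudo_orbit d f xs ->
       exists x, shadows d f eps xs x /\ limit_shadowing_point d f xs x).

(* All three properties come from the fact that two points of X_m are within 2^-(N+1) of
   each other exactly when their first N coordinates agree, a relation preserved by g.  Since p is isolated at distance > 1, a pseudo orbit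
   with small errors lies in X_m from time 1 on and is then followed, on the first N
   coordinates, by the orbit of its starting point.  For the failure of s-limit
   shadowing, take the exact orbit of g^(m_N)(q) preceded by p: it is a limit pseudo
   orbit, and a 1/2-shadowing point must be p itself, whose orbit q, g(q), ... differs
   from that of g^(m_N)(q) at coordinate N+1 forever. *)
From Stdlib Require Import Reals Lra Lia Arith.
Open Scope R_scope.

Lemma half_pow_pos n : 0 < (/2) ^ n.
Proof. apply pow_lt; lra. Qed.

Lemma half_pow_lt m n : (m < n)%nat -> (/2) ^ n < (/2) ^ m.
Proof.
  intro Hmn. rewrite !pow_inv.
  apply Rinv_lt_contravar; [apply Rmult_lt_0_compat; apply pow_lt; lra |].
  apply Rlt_pow; [lra | exact Hmn].
Qed.

Lemma half_pow_le m n : (m <= n)%nat -> (/2) ^ n <= (/2) ^ m.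
Proof.
  intro Hmn. destruct (Nat.eq_dec m n) as [-> |]; [lra |].
  left. apply half_pow_lt. lia.
Qed.

Lemma half_pow_lt_1 n : (0 < n)%nat -> (/2) ^ n < 1.
Proof. intro Hn. rewrite <- (pow_O (/2)). now apply half_pow_lt. Qed.

Lemma exists_half_pow_le eps : eps > 0 -> exists N, (/2) ^ S N <= eps.
Proof.
  intro Heps. destruct (pow_lt_1_zero (/2)) with eps as [N HN];
    [rewrite Rabs_pos_eq; lra | exact Heps |].
  exists N. specialize (HN (S N) ltac:(lia)).
  rewrite Rabs_pos_eq in HN; [lra | left; apply half_pow_pos].
Qed.

Lemma add_mod_neq a j n : (0 < a < n)%nat -> ((a + j) mod n <> j mod n)%nat.
Proof.
  intros Ha Heq. rewrite Nat.Div0.add_mod, (Nat.mod_small a n) in Heq by lia.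
  pose proof (Nat.mod_upper_bound j n ltac:(lia)).
  set (r := (j mod n)%nat) in *.
  pose proof (Nat.div_mod (a + r) n ltac:(lia)) as Hdiv. rewrite Heq in Hdiv.
  set (t := ((a + r) / n)%nat) in *. clearbody t r.
  destruct t; nia.
Qed.

Lemma odo_divide_le (M : odoseq) k n : (k <= n)%nat -> Nat.divide (M k) (M n).
Proof.
  induction 1; [apply Nat.divide_refl |].
  eapply Nat.divide_trans; [exact IHle | apply m_div].
Qed.

Lemma odo_g_iter_coord (M : odoseq) n (x : Xm M) k :
  proj1_sig (Nat.iter n (odo_g M) x) k = ((proj1_sig x k + n) mod M k)%nat.
Proof.
  induction n as [|n IHn]; simpl.
  - rewrite Nat.add_0_r, Nat.mod_small; [reflexivity |].
    destruct x as [x Hx]. apply Hx.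
  - rewrite IHn, Nat.Div0.add_mod_idemp_l. f_equal. lia.
Qed.

Lemma ext_f_iter_Some (M : odoseq) n x :
  Nat.iter n (ext_f M) (Some x) = Some (Nat.iter n (odo_g M) x).
Proof. induction n as [|n IHn]; simpl; [reflexivity | now rewrite IHn]. Qed.

Definition agree_below (M : odoseq) N (x y : Xm M) : Prop :=
  forall k, (k < N)%nat -> proj1_sig x k = proj1_sig y k.

Lemma agree_below_sym M N x y : agree_below M N x y -> agree_below M N y x.
Proof. intros H k Hk. symmetry. now apply H. Qed.

Lemma agree_below_trans M N x y z :
  agree_below M N x y -> agree_below M N y z -> agree_below M N x z.
Proof. intros Hxy Hyz k Hk. rewrite Hxy, Hyz; auto. Qed.

Lemma agree_below_odo_g M N x y :
  agree_below M N x y -> agree_below M N (odo_g M x) (odo_g M y).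
Proof. intros H k Hk. simpl. now rewrite H. Qed.

Lemma agree_below_odo_g_iter M N n x y :
  agree_below M N x y ->
  agree_below M N (Nat.iter n (odo_g M) x) (Nat.iter n (odo_g M) y).
Proof. induction n; simpl; auto using agree_below_odo_g. Qed.

(* Adding m_N to every coordinate leaves the first N coordinates unchanged but moves
   coordinate N+1 by m_N, which is a nonzero residue modulo m_(N+1). *)
Lemma odo_g_period_agree_below (M : odoseq) N x :
  agree_below M N x (Nat.iter (M N) (odo_g M) x).
Proof.
  intros k Hk. rewrite odo_g_iter_coord. destruct x as [x Hx]; simpl.
  rewrite <- Nat.Div0.add_mod_idemp_r, (proj2 (Nat.Lcm0.mod_divide (M N) (M k))), Nat.add_0_r
    by (apply odo_divide_le; lia).
  symmetry. apply Nat.mod_small, Hx.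
Qed.

Lemma odo_g_period_coord_neq (M : odoseq) N n :
  proj1_sig (Nat.iter n (odo_g M) (Nat.iter (M N) (odo_g M) (odo_q M))) (S N) <>
  proj1_sig (Nat.iter n (odo_g M) (odo_q M)) (S N).
Proof.
  rewrite !odo_g_iter_coord. simpl.
  rewrite (Nat.mod_small (M N) (M (S N))) by apply m_inc.
  apply add_mod_neq. pose proof (odo_pos M N). pose proof (m_inc M N). lia.
Qed.

Section OdometerMetric.

Variable M : odoseq.
Variable D : option (Xm M) -> option (Xm M) -> R.
Hypothesis D_lub : forall x y : Xm M, is_lub (odo_dist_set M x y) (D (Some x) (Some y)).

Lemma dist_ge_of_coord_neq x y k :
  proj1_sig x k <> proj1_sig y k -> (/2) ^ S k <= D (Some x) (Some y).
Proof.
  intro Hneq. apply (proj1 (D_lub x y)). exists k.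
  unfold discr. destruct (Nat.eq_dec _ _); [contradiction | ring].
Qed.

Lemma agree_below_of_dist_le N x y :
  D (Some x) (Some y) <= (/2) ^ S N -> agree_below M N x y.
Proof.
  intros Hle k Hk. destruct (Nat.eq_dec (proj1_sig x k) (proj1_sig y k)) as [| Hneq];
    [assumption | exfalso].
  apply (Rle_not_lt _ _ (Rle_trans _ _ _ (dist_ge_of_coord_neq x y k Hneq) Hle)).
  apply half_pow_lt. lia.
Qed.

Lemma dist_le_of_agree_below N x y :
  agree_below M N x y -> D (Some x) (Some y) <= (/2) ^ S N.
Proof.
  intro Hagree. apply (proj2 (D_lub x y)). intros r [i ->].
  unfold discr. destruct (Nat.eq_dec _ _) as [| Hneq].
  - rewrite Rmult_0_r. left. apply half_pow_pos.
  - rewrite Rmult_1_r. apply half_pow_le.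
    destruct (Nat.lt_ge_cases i N); [exfalso; auto | lia].
Qed.

Hypothesis D_metric : is_metric D.
Hypothesis D_isolated : forall x : Xm M, D None (Some x) > 1.

Let f := ext_f M.

Lemma D_refl a : D a a = 0.
Proof. now apply (proj1 D_metric). Qed.

Lemma D_isolated_r x : D (Some x) None > 1.
Proof. rewrite (proj1 (proj2 D_metric)). apply D_isolated. Qed.

Lemma ext_f_equicontinuous : equicontinuous D f.
Proof.
  intros eps Heps. destruct (exists_half_pow_le eps Heps) as [N HN].
  exists ((/2) ^ S N). split; [apply half_pow_pos |].
  pose proof (half_pow_lt_1 (S N) ltac:(lia)).
  intros [x|] [y|] Hxy n.
  - unfold f. rewrite !ext_f_iter_Some. eapply Rle_trans; [| exact HN].
    apply dist_le_of_agree_below, agree_below_odo_g_iter, agree_below_of_dist_le, Hxy.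
  - pose proof (D_isolated_r x). lra.
  - pose proof (D_isolated y). lra.
  - rewrite D_refl. lra.
Qed.

(* With errors below 1 a pseudo orbit never returns to p, and each error below
   2^-(N+1) preserves agreement on the first N coordinates. *)
Lemma pseudo_orbit_agree_below N xs w :
  pseudo_orbit D f ((/2) ^ S N) xs -> f (xs 0%nat) = Some w ->
  forall i, exists y, xs (S i) = Some y /\ agree_below M N y (Nat.iter i (odo_g M) w).
Proof.
  intros Hpo Hw. pose proof (half_pow_lt_1 (S N) ltac:(lia)).
  induction i as [|i [y [Hy Hagree]]].
  - specialize (Hpo 0%nat). rewrite Hw in Hpo.
    destruct (xs 1%nat) as [y|]; [| pose proof (D_isolated_r w); lra].
    exists y. split; [reflexivity |].
    apply agree_below_sym, agree_below_of_dist_le, Hpo.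
  - specialize (Hpo (S i)). rewrite Hy in Hpo. unfold f in Hpo. cbn [ext_f] in Hpo.
    destruct (xs (S (S i))) as [y'|]; [| pose proof (D_isolated_r (odo_g M y)); lra].
    exists y'. split; [reflexivity |]. simpl.
    apply (agree_below_trans _ _ _ (odo_g M y));
      [apply agree_below_sym, agree_below_of_dist_le, Hpo | now apply agree_below_odo_g].
Qed.

Lemma ext_f_shadowing : shadowing_property D f.
Proof.
  intros eps Heps. destruct (exists_half_pow_le eps Heps) as [N HN].
  exists ((/2) ^ S N). split; [apply half_pow_pos |].
  intros xs Hpo.
  assert (Hw : exists w, f (xs 0%nat) = Some w) by (destruct (xs 0%nat); simpl; eauto).
  destruct Hw as [w Hw].
  exists (xs 0%nat). intros [|i].
  - simpl. rewrite D_refl. lra.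
  - rewrite Nat.iter_succ_r, Hw. unfold f. rewrite ext_f_iter_Some.
    destruct (pseudo_orbit_agree_below N xs w Hpo Hw i) as [y [-> Hagree]].
    eapply Rle_trans; [| exact HN]. now apply dist_le_of_agree_below.
Qed.

Lemma ext_f_not_s_limit_shadowing : ~ s_limit_shadowing_property D f.
Proof.
  intro Hslim. destruct (Hslim (/2) ltac:(lra)) as [delta [Hdelta [_ Hlim]]].
  destruct (exists_half_pow_le delta Hdelta) as [N HN].
  set (y := Nat.iter (M N) (odo_g M) (odo_q M)).
  set (xs := fun i => match i with
                      | O => None
                      | S j => Some (Nat.iter j (odo_g M) y)
                      end).
  destruct (Hlim xs) as [[x|] [Hshadow Hlimpt]].
  - intros [|i]; simpl.
    + eapply Rle_trans; [| exact HN].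
      apply dist_le_of_agree_below, odo_g_period_agree_below.
    + rewrite D_refl. lra.
  - intros e He. exists 1%nat. intros [|n] Hn; [lia |].
    unfold R_dist. simpl. rewrite D_refl, Rminus_0_r, Rabs_R0. exact He.
  - specialize (Hshadow 0%nat). simpl in Hshadow. pose proof (D_isolated x). lra.
  - destruct (Hlimpt ((/2) ^ S (S N)) (half_pow_pos _)) as [n0 Hn0].
    specialize (Hn0 (S n0) ltac:(lia)).
    unfold R_dist in Hn0. rewrite Rminus_0_r in Hn0. simpl xs in Hn0.
    rewrite Nat.iter_succ_r in Hn0. unfold f in Hn0. simpl ext_f in Hn0.
    rewrite ext_f_iter_Some in Hn0.
    pose proof (dist_ge_of_coord_neq _ _ _ (odo_g_period_coord_neq M N n0)) as Hfar.
    rewrite Rabs_pos_eq in Hn0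
      by (left; exact (Rlt_le_trans _ _ _ (half_pow_pos _) Hfar)).
    exact (Rlt_irrefl _ (Rlt_le_trans _ _ _ Hn0 Hfar)).
Qed.

End OdometerMetric.

Theorem mainTheorem14 (M : odoseq) (D : option (Xm M) -> option (Xm M) -> R) :
  is_metric D ->
  (forall x y : Xm M, is_lub (odo_dist_set M x y) (D (Some x) (Some y))) ->
  (forall x : Xm M, D None (Some x) > 1) ->
  equicontinuous D (ext_f M) /\ shadowing_property D (ext_f M) /\
  ~ s_limit_shadowing_property D (ext_f M).
Proof.
  intros D_metric D_lub D_isolated.
  split; [| split].
  - exact (ext_f_equicontinuous M D D_lub D_metric D_isolated).
  - exact (ext_f_shadowing M D D_lub D_metric D_isolated).
  - exact (ext_f_not_s_limit_shadowing M D D_lub D_metric D_isolated).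
Qed.
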